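(* Let $x=[a_0,a_1,a_2,\ldots]$ and $y=[b_0,b_1,b_2,\ldots]$ be irrational real numbers with convergents $s_k/t_k$ and $s_k'/t_k'$ respectively, and let $k\ge 0$ be such that $a_i\equiv b_i \pmod 4$ for all $0\le i\le k$. Then $\left(\frac{s_k}{t_k}\right)=\left(\frac{s_k'}{t_k'}\right)$, i.e. the Jacobi symbol $\left(\frac{s_k}{t_k}\right)$ depends only on the residue classes of $a_0,a_1,\ldots,a_k$ in $\mathbb{Z}/4\mathbb{Z}$. If moreover $a_0\ge 0$ and $b_0\ge 0$, then also $\left(\frac{t_k}{s_k}\right)=\left(\frac{t_k'}{s_k'}\right)$.
   Context: For $x\in\mathbb{R}\setminus\mathbb{Q}$ with regular continued fraction expansion $x=[a_0,a_1,a_2,\ldots]$ ($a_0\in\mathbb{Z}$, $a_i\ge 1$ for $i\ge1$), the convergents $s_k/t_k$ are defined by $s_{-1}=1$, $s_0=a_0$, $s_k=a_ks_{k-1}+s_{k-2}$ and $t_{-1}=0$, $t_0=1$, $t_k=a_kt_{k-1}+t_{k-2}$ for $k\ge1$; note $\gcd(s_k,t_k)=1$. For an odd natural number $n$ and an integer $m$ coprime to $n$, $\left(\frac{m}{n}\right)$ is the usual Jacobi symbol (equal to $1$ when $n=1$). If $n$ is even (including $n=0$) and $\gcd(m,n)=1$, one sets $\left(\frac{m}{n}\right)=*$, where $*$ is a fixed symbol different from $\pm1$. *)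

From HB Require Import structures.
From mathcomp Require Import all_boot all_order all_algebra.
From mathcomp Require Import all_classical all_reals.
Set Implicit Arguments. Unset Strict Implicit. Unset Printing Implicit Defensive.
Import Order.TTheory GRing.Theory Num.Theory.
Local Open Scope ring_scope.

Fixpoint cf_rest (R : realType) (x : R) (i : nat) : R :=
  match i with
  | 0%N => x
  | i'.+1 => (cf_rest x i' - (Num.floor (cf_rest x i'))%:~R)^-1
  end.

Definition cf_digit (R : realType) (x : R) (i : nat) : int :=
  Num.floor (cf_rest x i).

(* returns (s_{k-1}, s_k), with s_{-1} = 1, s_0 = a_0 *)
Fixpoint num_pair (a : nat -> int) (k : nat) : int * int :=
  match k with
  | 0%N => (1, a 0%N)
  | k'.+1 => let: (u, v) := num_pair a k' in (v, a k'.+1 * v + u)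
  end.

(* returns (t_{k-1}, t_k), with t_{-1} = 0, t_0 = 1 *)
Fixpoint den_pair (a : nat -> int) (k : nat) : int * int :=
  match k with
  | 0%N => (0, 1)
  | k'.+1 => let: (u, v) := den_pair a k' in (v, a k'.+1 * v + u)
  end.

Definition cf_num (a : nat -> int) (k : nat) : int := (num_pair a k).2.
Definition cf_den (a : nat -> int) (k : nat) : int := (den_pair a k).2.

Inductive jsym : Type := JVal of int | JStar.

(* Legendre symbol (m/p) for an odd prime p, via Euler's criterion *)
Definition legendre (m : int) (p : nat) : int :=
  if (p%:Z %| m)%Z then 0
  else if ((m ^+ (p.-1 %/ 2)) %% p%:Z)%Z == 1 then 1 else -1.

(* (m/n): Jacobi symbol for odd natural n (product of Legendre symbols over
   the prime factorisation; = 1 for n = 1), and * for even n (incl. n = 0). *)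
Definition jacobi (m : int) (n : nat) : jsym :=
  if odd n then JVal (\prod_(p <- primes n) legendre m p ^+ logn p n)
  else JStar.

From mathcomp Require Import all_boot all_order all_algebra finfield.
From mathcomp Require Import all_classical all_reals.
From mathcomp Require Import zify ring lra.
Import Order.TTheory GRing.Theory Num.Theory.
Set Implicit Arguments. Unset Strict Implicit.
Local Open Scope ring_scope.

(* Writing a' for the shifted digits, s = s_k(a') and t = t_k(a'), the convergents of a
   satisfy s_(k+1) = a_0 s + t and t_(k+1) = s.  Hence (s_(k+1)/t_(k+1)) = (t/s), and by
   induction on k it remains to see that (s/(a_0 s + t)) depends only on a_0, s, t mod 4 and on
   the symbols (s/t), (t/s).  If s is odd, this is Jacobi reciprocity, whose sign only sees s
   and a_0 s + t mod 4.  If s is even, (s/(n + s)) = (-n/(n + s)) and reciprocity for the odd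
   pair n, n + s give (s/(n + s)) = e (s/n) with a sign e determined by n and s mod 4;
   iterating from n = t, and using that (s/n) has period 4s in n, leaves only a_0 mod 4.
   Quadratic reciprocity itself is proved through Gauss's lemma and Eisenstein's lattice
   point count. *)

Definition hpred (n : nat) : nat := (n.-1 %/ 2)%N.

Lemma odd_hpredE n : odd n -> n = (hpred n * 2).+1%N.
Proof.
move=> on; have : (n %% 2 = 1)%N by rewrite modn2 on.
rewrite /hpred; lia.
Qed.

Lemma odd_prime_gt2 p : prime p -> (2 < p)%N -> odd p.
Proof. by move=> pp p2; apply/negPn/negP => /(prime_oddPn pp) p_eq2; rewrite p_eq2 in p2. Qed.

Lemma odd_dvd_prime_gt2 n p : odd n -> prime p -> (p %| n)%N -> (2 < p)%N.
Proof.
move=> on pp pn; have := prime_gt1 pp; rewrite leq_eqVlt => /orP[/eqP p_eq2|//].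
by move: pn on; rewrite -p_eq2 => /dvdn_odd h /h.
Qed.

Section Legendre.

Variable p : nat.
Hypotheses (p_pr : prime p) (p_gt2 : (2 < p)%N).

Definition legendreFp (x : 'F_p) : int :=
  if x == 0 then 0 else if x ^+ hpred p == 1 then 1 else -1.

Lemma legendre_Fp m : legendre m p = legendreFp (m%:~R).
Proof.
have p_gt1 := prime_gt1 p_pr.
rewrite /legendre /legendreFp !(dvdz_pcharf (pchar_Fp p_pr)).
have -> : ((m ^+ hpred p) %% p == 1)%Z = (p%:Z %| m ^+ hpred p - 1)%Z.
  by rewrite -eqz_mod_dvd (modz_small (m := 1)) //= ltz_nat.
by rewrite (dvdz_pcharf (pchar_Fp p_pr)) intrB rmorphXn subr_eq0.
Qed.

Lemma Fp_N1_neq1 : (-1 : 'F_p) != 1.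
Proof.
apply/eqP => N1_eq1; have : (2%:R : 'F_p) == 0 by rewrite mulr2n -{1}N1_eq1 addNr.
rewrite -(dvdn_pcharf (pchar_Fp p_pr)) => /dvdn_leq -/(_ isT).
by rewrite leqNgt p_gt2.
Qed.

(* Euler: the square of x^((p-1)/2) is x^(p-1) = 1. *)
Lemma Fp_expr_hpred (x : 'F_p) : x != 0 ->
  (x ^+ hpred p == 1) || (x ^+ hpred p == -1).
Proof.
move=> x_neq0; rewrite -sqrf_eq1 -exprM.
have -> : (hpred p * 2 = p.-1)%N by rewrite [in RHS](odd_hpredE (odd_prime_gt2 p_pr p_gt2)).
apply/eqP/(mulfI x_neq0); rewrite mulr1 -exprS prednK ?prime_gt0 //.
by rewrite -{3}[p](card_Fp p_pr) expf_card.
Qed.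

Lemma legendreFpM x y : legendreFp (x * y) = legendreFp x * legendreFp y.
Proof.
rewrite /legendreFp mulf_eq0.
have [->|x_neq0] := eqVneq x 0; first by rewrite /= mul0r.
have [->|y_neq0] := eqVneq y 0; first by rewrite orbT /= mulr0.
have N1_neq1 := Fp_N1_neq1.
rewrite /= exprMn.
by have /orP[/eqP->|/eqP->] := Fp_expr_hpred x_neq0;
   have /orP[/eqP->|/eqP->] := Fp_expr_hpred y_neq0;
   rewrite ?mulr1 ?mul1r ?mulrNN ?eqxx ?(negPf N1_neq1) ?mulrN1 ?mulN1r ?opprK.
Qed.

Lemma legendreFp_sign (x : 'F_p) mu :
  x ^+ hpred p = (-1) ^+ mu -> legendreFp x = (-1) ^+ mu.
Proof.
move=> xE; rewrite /legendreFp; have [x_eq0|x_neq0] := eqVneq x 0.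
  move: xE; rewrite x_eq0 expr0n eqn0Ngt /hpred; have -> : (0 < p.-1 %/ 2)%N by lia.
  by move=> /esym/eqP; rewrite signr_eq0.
rewrite xE -signr_odd -[RHS]signr_odd.
by case: (odd mu); rewrite ?expr1 ?expr0 ?eqxx // (negPf Fp_N1_neq1).
Qed.

Lemma legendreM m1 m2 : legendre (m1 * m2) p = legendre m1 p * legendre m2 p.
Proof. by rewrite !legendre_Fp intrM legendreFpM. Qed.

Lemma legendreN1 : legendre (-1) p = (-1) ^+ hpred p.
Proof. by rewrite legendre_Fp intrN; apply: legendreFp_sign. Qed.

Lemma legendre1 : legendre 1 p = 1.
Proof. by rewrite legendre_Fp /legendreFp oner_eq0 expr1n eqxx. Qed.

Lemma legendre_addmul m c : legendre (m + c * p%:Z) p = legendre m p.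
Proof.
by rewrite !legendre_Fp intrD intrM (pchar_Fp_0 p_pr : (p%:Z)%:~R = 0 :> 'F_p) mulr0 addr0.
Qed.

Lemma legendre_sqr m : ~~ (p%:Z %| m)%Z -> legendre m p ^+ 2 = 1.
Proof. by rewrite /legendre => /negPf ->; case: ifP; rewrite ?sqrrN expr1n. Qed.

Lemma Fp_nat_inj (a b : nat) : (a < p)%N -> (b < p)%N ->
  (a%:R : 'F_p) = b%:R -> a = b.
Proof.
move=> a_lt_p b_lt_p /(congr1 (fun x : 'F_p => nat_of_ord x)) /=.
by rewrite !val_Fp_nat // !modn_small.
Qed.

End Legendre.

Lemma prod_sign (R : pzRingType) (P : pred nat) (s : seq nat) :
  \prod_(k <- s) (if P k then -1 else 1 : R) = (-1) ^+ count P s.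
Proof.
elim: s => [|a s IH]; first by rewrite big_nil.
by rewrite big_cons IH /=; case: (P a); rewrite ?mul1r // exprS.
Qed.

Section GaussLemma.

Variables p q : nat.
Hypotheses (p_pr : prime p) (p_gt2 : (2 < p)%N) (p_ndvd_q : ~~ (p %| q)%N).

Local Notation half_range := (index_iota 1 (hpred p).+1).

Definition gauss_res k := ((q * k) %% p)%N.
Definition gauss_big k := (hpred p < gauss_res k)%N.
Definition gauss_abs k := if gauss_big k then (p - gauss_res k)%N else gauss_res k.

Let pE := odd_hpredE (odd_prime_gt2 p_pr p_gt2).

Lemma gauss_res_gt0 k : (0 < k < p)%N -> (0 < gauss_res k)%N.
Proof.
move=> /andP[k_gt0 k_lt_p]; rewrite /gauss_res lt0n; apply/negP => /eqP qk_mod.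
have : (p %| q * k)%N by rewrite /dvdn qk_mod.
rewrite Euclid_dvdM // (negPf p_ndvd_q) /= => /(dvdn_leq k_gt0).
by rewrite leqNgt k_lt_p.
Qed.

Lemma gauss_res_lt k : (gauss_res k < p)%N.
Proof. by rewrite ltn_mod prime_gt0. Qed.

Lemma gauss_abs_range k : (0 < k < p)%N -> (0 < gauss_abs k <= hpred p)%N.
Proof.
move=> k_range; have r_gt0 := gauss_res_gt0 k_range.
have r_lt_p := gauss_res_lt k.
have := pE; rewrite /gauss_abs /gauss_big; case: ifP => big; lia.
Qed.

Lemma gauss_abs_Fp k :
  ((gauss_abs k)%:R : 'F_p) = (if gauss_big k then -1 else 1) * (q * k)%:R.
Proof.
rewrite /gauss_abs -(Fp_nat_mod p_pr (q * k)) -/(gauss_res k).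
case: ifP => _; rewrite ?mul1r // natrB ?(ltnW (gauss_res_lt k)) //.
by rewrite (pchar_Fp_0 p_pr) sub0r mulN1r.
Qed.

Lemma gauss_abs_inj : {in half_range &, injective gauss_abs}.
Proof.
move=> k k'; rewrite !mem_index_iota => k_range k'_range.
have q_neq0 : (q%:R : 'F_p) != 0 by rewrite -(dvdn_pcharf (pchar_Fp p_pr)).
move=> /(congr1 (fun n => (n%:R : 'F_p))); rewrite !gauss_abs_Fp !natrM.
have k_lt_p : (k < p)%N by lia.
have k'_lt_p : (k' < p)%N by lia.
case: (gauss_big k); case: (gauss_big k'); rewrite ?mul1r ?mulN1r.
- by move/oppr_inj/(mulfI q_neq0)/Fp_nat_inj; apply.
- move/eqP; rewrite eqr_oppLR -addr_eq0 -mulrDr mulf_eq0 (negPf q_neq0) /= -natrD.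
  by rewrite -(dvdn_pcharf (pchar_Fp p_pr)) => /(dvdn_leq _); lia.
- move/eqP; rewrite -addr_eq0 -mulrDr mulf_eq0 (negPf q_neq0) /= -natrD.
  by rewrite -(dvdn_pcharf (pchar_Fp p_pr)) => /(dvdn_leq _); lia.
- by move/(mulfI q_neq0)/Fp_nat_inj; apply.
Qed.

Lemma perm_gauss_abs : perm_eq (map gauss_abs half_range) half_range.
Proof.
have uniq_abs : uniq (map gauss_abs half_range).
  by rewrite map_inj_in_uniq ?iota_uniq //; apply: gauss_abs_inj.
have sub_abs : {subset map gauss_abs half_range <= half_range}.
  move=> x /mapP [k]; rewrite !mem_index_iota => k_range ->.
  have := @gauss_abs_range k; lia.
have [|_ same_mem] := uniq_min_size uniq_abs sub_abs; first by rewrite size_map.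
by apply: uniq_perm; rewrite ?iota_uniq.
Qed.

(* In F_p, prod_k gauss_abs k = prod_k k and gauss_abs k = +-q k. *)
Lemma gauss_lemma :
  (q%:R : 'F_p) ^+ hpred p = (-1) ^+ count gauss_big half_range.
Proof.
have prod_abs : \prod_(k <- half_range) ((gauss_abs k)%:R : 'F_p)
    = \prod_(k <- half_range) k%:R.
  by rewrite -(big_map gauss_abs xpredT (fun k => (k%:R : 'F_p))) (perm_big _ perm_gauss_abs).
have prod_neq0 : \prod_(k <- half_range) (k%:R : 'F_p) != 0.
  rewrite prodf_seq_neq0; apply/allP => k; rewrite mem_index_iota => k_range /=.
  by rewrite -(dvdn_pcharf (pchar_Fp p_pr)); apply/negP => /(dvdn_leq _); lia.
move: prod_abs; rewrite big_seq_cond.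
under eq_bigr => k /andP[k_range _] do rewrite gauss_abs_Fp natrM.
rewrite -big_seq_cond !big_split /= prod_sign prodr_const_nat subn1 /= mulrA.
rewrite -[in RHS](mul1r (\prod_(k <- half_range) _)) => /(mulIf prod_neq0) sign_eq.
by rewrite -[LHS](signrMK (count gauss_big half_range)) sign_eq mulr1.
Qed.

Lemma odd_sum_gauss_abs (s : seq nat) :
  odd (\sum_(k <- s) gauss_abs k) =
    odd (\sum_(k <- s) gauss_res k) (+) odd (count gauss_big s).
Proof.
have op := odd_prime_gt2 p_pr p_gt2.
elim: s => [|a s IH]; first by rewrite !big_nil.
rewrite !big_cons /= !oddD IH /gauss_abs.
case: (gauss_big a); rewrite ?oddB ?op; try exact: ltnW (gauss_res_lt a).
all: by case: (odd (gauss_res a)); case: (odd (\sum_(k <- s) gauss_res k));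
  case: (odd (count gauss_big s)).
Qed.

(* Eisenstein: compare the parities of sum_k q k = p sum_k (q k / p) + sum_k gauss_res k
   and of sum_k gauss_abs k = sum_k k. *)
Lemma odd_count_gauss_big : odd q ->
  odd (count gauss_big half_range) = odd (\sum_(k <- half_range) (q * k) %/ p)%N.
Proof.
move=> oq; have op := odd_prime_gt2 p_pr p_gt2.
have sum_abs : \sum_(k <- half_range) gauss_abs k = \sum_(k <- half_range) k.
  by rewrite -(big_map gauss_abs xpredT (fun k => k)) (perm_big _ perm_gauss_abs).
have sum_qk : (\sum_(k <- half_range) q * k =
    p * \sum_(k <- half_range) (q * k) %/ p + \sum_(k <- half_range) gauss_res k)%N.
  rewrite big_distrr -big_split /=; apply: eq_bigr => k _.
  by rewrite /gauss_res {1}(divn_eq (q * k) p) mulnC.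
have odd_qk : odd (\sum_(k <- half_range) q * k)%N = odd (\sum_(k <- half_range) k)%N.
  by rewrite -big_distrr oddM oq.
have := odd_sum_gauss_abs half_range; rewrite sum_abs -odd_qk sum_qk oddD oddM op /=.
by case: (odd (\sum_(k <- half_range) gauss_res k));
  case: (odd (\sum_(k <- half_range) (q * k) %/ p)%N); case: (odd (count gauss_big half_range)).
Qed.

Lemma legendre_sum_floor : odd q ->
  legendre q%:Z p = (-1) ^+ (\sum_(k <- half_range) (q * k) %/ p)%N.
Proof.
move=> oq; rewrite (legendre_Fp p_pr) (legendreFp_sign p_pr p_gt2 gauss_lemma).
by rewrite -signr_odd odd_count_gauss_big // signr_odd.
Qed.

End GaussLemma.

Lemma count_le_sum (M m : nat) : (\sum_(1 <= l < M.+1) (l <= m) = minn M m)%N.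
Proof.
elim: M => [|M IH]; first by rewrite big_geq // min0n.
by rewrite big_nat_recr //= IH; case: (leqP M.+1 m) => h /=; lia.
Qed.

Lemma divn_count p n h : (0 < p)%N -> (n %/ p <= h)%N ->
  (n %/ p = \sum_(1 <= l < h.+1) (l * p <= n))%N.
Proof.
move=> p_gt0 n_le; under eq_bigr => l _ do rewrite -leq_divRL //.
by rewrite count_le_sum; lia.
Qed.

(* Both sides count the lattice points of [1, (p-1)/2] x [1, (q-1)/2], split by the
   diagonal l p = k q, which contains none of them. *)
Lemma sum_floor_reciprocity p q : odd p -> odd q -> coprime p q ->
  (\sum_(1 <= k < (hpred p).+1) (q * k) %/ p +
   \sum_(1 <= l < (hpred q).+1) (p * l) %/ q = hpred p * hpred q)%N.
Proof.
move=> op oq cop; have pE := odd_hpredE op; have qE := odd_hpredE oq.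
set h := hpred p in pE *; set h' := hpred q in qE *.
have below : (\sum_(1 <= k < h.+1) (q * k) %/ p =
    \sum_(1 <= k < h.+1) \sum_(1 <= l < h'.+1) (l * p <= q * k))%N.
  rewrite big_seq_cond [RHS]big_seq_cond; apply: eq_bigr => k.
  rewrite mem_index_iota andbT => k_range; apply: divn_count; first lia.
  rewrite -ltnS ltn_divLR; last lia.
  have : (q * k <= q * h)%N by rewrite leq_mul2l; lia.
  lia.
have above : (\sum_(1 <= l < h'.+1) (p * l) %/ q =
    \sum_(1 <= l < h'.+1) \sum_(1 <= k < h.+1) ~~ (l * p <= q * k))%N.
  rewrite big_seq_cond [RHS]big_seq_cond; apply: eq_bigr => l.
  rewrite mem_index_iota andbT => l_range; rewrite (divn_count (h := h)); first last.
  - rewrite -ltnS ltn_divLR; last lia.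
    have : (p * l <= p * h')%N by rewrite leq_mul2l; lia.
    lia.
  - lia.
  rewrite big_seq_cond [RHS]big_seq_cond; apply: eq_bigr => k.
  rewrite mem_index_iota andbT => k_range; rewrite -ltnNge ltn_neqAle [(k * q)%N]mulnC [(p * l)%N]mulnC.
  suff -> : (q * k != l * p)%N by [].
  apply/negP => /eqP qk_eq.
  have : (p %| k)%N by rewrite -(Gauss_dvdr k cop) qk_eq dvdn_mull.
  by move=> /(dvdn_leq _); lia.
rewrite below above (exchange_big_nat _ 1 h'.+1 1 h.+1) -big_split /=.
rewrite (eq_bigr (fun _ => h')); first by rewrite sum_nat_const_nat subn1.
move=> k _; rewrite -big_split /= (eq_bigr (fun _ => 1%N)).
  by rewrite sum_nat_const_nat subn1 muln1.
by move=> l _; case: (l * p <= q * k)%N.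
Qed.

Theorem legendre_reciprocity p q : prime p -> prime q -> (2 < p)%N -> (2 < q)%N -> p != q ->
  legendre q%:Z p * legendre p%:Z q = (-1) ^+ (hpred p * hpred q)%N.
Proof.
move=> pp qp p_gt2 q_gt2 p_neq_q.
have p_ndvd_q : ~~ (p %| q)%N by rewrite dvdn_prime2.
have q_ndvd_p : ~~ (q %| p)%N by rewrite dvdn_prime2 // eq_sym.
rewrite !legendre_sum_floor ?odd_prime_gt2 // -exprD sum_floor_reciprocity ?odd_prime_gt2 //.
by rewrite prime_coprime.
Qed.

Definition jacobi_val (m : int) (n : nat) : int :=
  \prod_(p <- primes n) legendre m p ^+ logn p n.

Lemma jacobiE m n : jacobi m n = if odd n then JVal (jacobi_val m n) else JStar.
Proof. by []. Qed.

Lemma jacobi_val_iota m n N : (0 < n < N)%N ->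
  jacobi_val m n = \prod_(0 <= p < N) legendre m p ^+ logn p n.
Proof.
move=> /andP[n_gt0 n_lt_N]; rewrite /jacobi_val -(filter_pi_of n_lt_N) big_filter big_mkcond.
apply: eq_bigr => p _; case: ifP => //= p_nprimes.
suff -> : logn p n = 0%N by rewrite expr0.
by apply/eqP; rewrite -leqn0 leqNgt logn_gt0 p_nprimes.
Qed.

Lemma jacobi_valMr m n1 n2 : (0 < n1)%N -> (0 < n2)%N ->
  jacobi_val m (n1 * n2) = jacobi_val m n1 * jacobi_val m n2.
Proof.
move=> n1_gt0 n2_gt0; have n_gt0 : (0 < n1 * n2)%N by rewrite muln_gt0 n1_gt0.
rewrite !(jacobi_val_iota m (N := (n1 * n2).+1)); try by apply/andP; split => //; nia.
by rewrite -big_split /=; apply: eq_bigr => p _; rewrite lognM // exprD.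
Qed.

Lemma jacobi_valMl m1 m2 n : odd n ->
  jacobi_val (m1 * m2) n = jacobi_val m1 n * jacobi_val m2 n.
Proof.
move=> on; rewrite /jacobi_val -big_split /= big_seq [RHS]big_seq.
apply: eq_bigr => p; rewrite mem_primes => /and3P[pp _ p_dvd_n].
by rewrite legendreM ?(odd_dvd_prime_gt2 on) // exprMn.
Qed.

Lemma jacobi_val_prime m p : prime p -> jacobi_val m p = legendre m p.
Proof. by move=> pp; rewrite /jacobi_val primes_prime // big_seq1 logn_prime // eqxx expr1. Qed.

Lemma jacobi_val1r m : jacobi_val m 1 = 1.
Proof. by rewrite /jacobi_val big_nil. Qed.

Lemma jacobi_val1l n : jacobi_val 1 n = 1.
Proof.
rewrite /jacobi_val big_seq big1 // => p; rewrite mem_primes => /and3P[pp _ _].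
by rewrite legendre1 // expr1n.
Qed.

Lemma jacobi_val_addmul m c n : jacobi_val (m + c * n%:Z) n = jacobi_val m n.
Proof.
rewrite /jacobi_val big_seq [RHS]big_seq; apply: eq_bigr => p.
rewrite mem_primes => /and3P[pp _ p_dvd_n].
by rewrite -(divnK p_dvd_n) PoszM mulrA legendre_addmul.
Qed.

Lemma odd_prime_ind (P : nat -> Prop) : P 1%N ->
  (forall p n, prime p -> (2 < p)%N -> odd n -> P n -> P (p * n)%N) ->
  forall n, odd n -> P n.
Proof.
move=> P1 PS n; elim: n {-2}n (leqnn n) => [|N IH] n n_le_N on.
  by move: n_le_N on; rewrite leqn0 => /eqP->.
have [n_le1|n_gt1] := leqP n 1; first by case: n n_le1 on {n_le_N} => [|[|]].
have pp := pdiv_prime n_gt1; have p_dvd_n := pdiv_dvd n.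
have nE : n = (pdiv n * (n %/ pdiv n))%N by rewrite mulnC divnK.
have on' : odd (n %/ pdiv n) by move: on; rewrite {1}nE oddM => /andP[].
rewrite nE; apply: PS (odd_dvd_prime_gt2 on pp p_dvd_n) on' (IH _ _ on') => //.
by have := ltn_Pdiv (prime_gt1 pp) (ltnW n_gt1); lia.
Qed.

Lemma hpredM a b : odd a -> odd b ->
  hpred (a * b) = (2 * (hpred a * hpred b) + hpred a + hpred b)%N.
Proof.
move=> oa ob; rewrite {1}(odd_hpredE oa) {1}(odd_hpredE ob) /hpred.
set x := hpred a; set y := hpred b.
have -> : (((x * 2).+1 * (y * 2).+1).-1 = (2 * (x * y) + x + y) * 2)%N by nia.
by rewrite mulnK.
Qed.

Lemma signr_hpredM c a b : odd a -> odd b ->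
  (-1) ^+ (c * hpred (a * b))%N = (-1) ^+ (c * hpred a)%N * (-1) ^+ (c * hpred b)%N :> int.
Proof.
move=> oa ob; rewrite hpredM //.
have -> : (c * (2 * (hpred a * hpred b) + hpred a + hpred b) =
    2 * (c * (hpred a * hpred b)) + (c * hpred a + c * hpred b))%N by ring.
by rewrite exprD exprM sqrrN !expr1n mul1r exprD.
Qed.

Lemma jacobi_valN1 n : odd n -> jacobi_val (-1) n = (-1) ^+ hpred n.
Proof.
move: n; apply: odd_prime_ind => [|p n pp p_gt2 on IH]; first by rewrite jacobi_val1r.
rewrite jacobi_valMr ?(prime_gt0 pp) ?(odd_gt0 on) // jacobi_val_prime // legendreN1 // IH.
by rewrite -[hpred (p * n)]mul1n signr_hpredM ?(odd_prime_gt2 pp) // !mul1n.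
Qed.

Lemma jacobi_val_sqr m n : odd n -> coprime `|m| n -> jacobi_val m n ^+ 2 = 1.
Proof.
move: n; apply: odd_prime_ind => [|p n pp p_gt2 on IH]; first by rewrite jacobi_val1r expr1n.
rewrite coprimeMr => /andP[cop_mp cop_mn].
rewrite jacobi_valMr ?(prime_gt0 pp) ?(odd_gt0 on) // exprMn IH // jacobi_val_prime // mulr1.
by apply: legendre_sqr => //; rewrite /dvdz /= -prime_coprime // coprime_sym.
Qed.

Lemma jacobi_val_reciprocity_prime p n : prime p -> (2 < p)%N -> odd n -> coprime p n ->
  jacobi_val p%:Z n * jacobi_val n%:Z p = (-1) ^+ (hpred p * hpred n)%N.
Proof.
move=> pp p_gt2; move: n; apply: odd_prime_ind => [|q n qp q_gt2 on IH].
  by rewrite jacobi_val1r jacobi_val_prime // legendre1 // muln0 mulr1.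
rewrite coprimeMr => /andP[cop_pq cop_pn].
have p_neq_q : p != q by apply: contraTneq cop_pq => ->; rewrite prime_coprime // dvdnn.
rewrite jacobi_valMr ?(prime_gt0 qp) ?(odd_gt0 on) // PoszM jacobi_valMl ?(odd_prime_gt2 pp) //.
rewrite (jacobi_val_prime _ qp) (jacobi_val_prime _ pp) mulrACA [X in X * _]mulrC.
rewrite legendre_reciprocity // IH //.
by rewrite signr_hpredM ?(odd_prime_gt2 qp).
Qed.

Theorem jacobi_val_reciprocity m n : odd m -> odd n -> coprime m n ->
  jacobi_val m%:Z n * jacobi_val n%:Z m = (-1) ^+ (hpred m * hpred n)%N.
Proof.
move=> om on; move: m om; apply: odd_prime_ind => [|p m pp p_gt2 om IH].
  by rewrite jacobi_val1l jacobi_val1r mul0n mulr1.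
rewrite coprimeMl => /andP[cop_pn cop_mn].
rewrite jacobi_valMr ?(prime_gt0 pp) ?(odd_gt0 om) // PoszM jacobi_valMl //.
rewrite mulrACA jacobi_val_reciprocity_prime // IH // ![(_ * hpred n)%N]mulnC.
by rewrite signr_hpredM ?(odd_prime_gt2 pp).
Qed.

Lemma jacobi_val_flip m n : odd m -> odd n -> coprime m n ->
  jacobi_val m%:Z n = (-1) ^+ (hpred m * hpred n)%N * jacobi_val n%:Z m.
Proof.
move=> om on cop; rewrite -jacobi_val_reciprocity // -mulrA -expr2 jacobi_val_sqr ?mulr1 //.
by rewrite coprime_sym.
Qed.

Lemma odd_mod4 x y : x = y %[mod 4] -> odd x = odd y.
Proof. by move=> xy_mod; rewrite -[odd x](odd_mod _ (erefl : odd 4 = false)) xy_mod odd_mod. Qed.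

Lemma odd_hpred_mod4 x y : odd x -> x = y %[mod 4] -> odd (hpred x) = odd (hpred y).
Proof.
move=> ox xy_mod; have : (x %% 2 = 1)%N by rewrite modn2 ox.
suff : (hpred x %% 2 = hpred y %% 2)%N by rewrite !modn2; do 2 case: odd.
rewrite /hpred; lia.
Qed.

Lemma signr_hpred_mod4 x y : odd x -> x = y %[mod 4] ->
  (-1) ^+ hpred x = (-1) ^+ hpred y :> int.
Proof. by move=> ox xy_mod; rewrite -signr_odd (odd_hpred_mod4 ox xy_mod) signr_odd. Qed.

Lemma signr_hpredM_mod4 x y x' y' : odd x -> odd y ->
  x = x' %[mod 4] -> y = y' %[mod 4] ->
  (-1) ^+ (hpred x * hpred y)%N = (-1) ^+ (hpred x' * hpred y')%N :> int.
Proof.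
move=> ox oy xx_mod yy_mod.
by rewrite -signr_odd oddM (odd_hpred_mod4 ox xx_mod) (odd_hpred_mod4 oy yy_mod) -oddM signr_odd.
Qed.

Lemma coprime_addmull s t r : coprime s (t + r * s) = coprime s t.
Proof. by rewrite /coprime addnC gcdnMDl. Qed.

Lemma coprime_even_odd s t : coprime s t -> ~~ odd s -> odd t.
Proof.
move=> /eqP gcd1 es; apply/negPn/negP => et.
have : (2 %| gcdn s t)%N by rewrite dvdn_gcd !dvdn2 es et.
by rewrite gcd1.
Qed.

(* (a / (n + a)) = (-n / (n + a)), then reciprocity for the odd pair n, n + a. *)
Lemma jacobi_val_add_even a n : odd n -> ~~ odd a -> coprime a n ->
  jacobi_val a%:Z (n + a) =
    jacobi_val a%:Z n * ((-1) ^+ hpred (n + a) * (-1) ^+ (hpred n * hpred (n + a))%N).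
Proof.
move=> on ea cop_an; have ona : odd (n + a) by rewrite oddD on (negPf ea).
have cop_n_na : coprime n (n + a) by rewrite /coprime gcdnDl -/(coprime n a) coprime_sym.
have -> : jacobi_val a%:Z (n + a) = jacobi_val (- n%:Z) (n + a).
  by rewrite -(jacobi_val_addmul (- n%:Z) 1) mul1r PoszD addKr.
rewrite -[- n%:Z]mulN1r jacobi_valMl // jacobi_valN1 // jacobi_val_flip //.
have -> : jacobi_val (n + a)%N%:Z n = jacobi_val a%:Z n.
  by rewrite -(jacobi_val_addmul a%:Z 1) mul1r PoszD addrC.
by ring.
Qed.

Lemma jacobi_val_add4mul a n : odd n -> coprime a n ->
  jacobi_val a%:Z (n + 4 * a) = jacobi_val a%:Z n.
Proof.
move=> on cop_an.
have jacobi_val4M m : odd m -> jacobi_val (4 * a)%N%:Z m = jacobi_val a%:Z m.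
  move=> om; rewrite PoszM jacobi_valMl // (_ : 4%:Z = 2 * 2) // jacobi_valMl //.
  by rewrite -expr2 jacobi_val_sqr ?mul1r // coprime2n.
have cop_4an : coprime (4 * a) n.
  by rewrite coprimeMl cop_an andbT -[4%N]/(2 * 2)%N coprimeMl coprime2n on.
have on4a : odd (n + 4 * a) by rewrite oddD oddM on.
have n4a_mod : n + 4 * a = n %[mod 4] by lia.
rewrite -!jacobi_val4M // (jacobi_val_add_even on) ?oddM //.
rewrite -(signr_hpred_mod4 on (esym n4a_mod)) -(signr_hpredM_mod4 on on (erefl _) (esym n4a_mod)).
by rewrite -exprD -signr_odd oddD oddM andbb addbb mulr1.
Qed.

Lemma jacobi_val_addmul_even_mod4 s t s' t' r :
  ~~ odd s -> ~~ odd s' -> odd t -> odd t' -> coprime s t -> coprime s' t' ->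
  s = s' %[mod 4] -> t = t' %[mod 4] -> jacobi_val s%:Z t = jacobi_val s'%:Z t' ->
  jacobi_val s%:Z (t + r * s) = jacobi_val s'%:Z (t' + r * s').
Proof.
move=> es es' ot ot' cop cop' ss_mod tt_mod jacobi_eq.
elim: r => [|r IH]; first by rewrite !mul0n !addn0.
have on : odd (t + r * s) by rewrite oddD oddM (negPf es) andbF ot.
have on' : odd (t' + r * s') by rewrite oddD oddM (negPf es') andbF ot'.
have n_mod : t + r * s = t' + r * s' %[mod 4].
  by rewrite -modnDm -modnMmr ss_mod tt_mod modnMmr modnDm.
have ns_mod : t + r * s + s = t' + r * s' + s' %[mod 4].
  by rewrite -modnDm n_mod ss_mod modnDm.
have -> : (t + r.+1 * s = t + r * s + s)%N by rewrite mulSn; lia.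
have -> : (t' + r.+1 * s' = t' + r * s' + s')%N by rewrite mulSn; lia.
rewrite jacobi_val_add_even ?coprime_addmull // jacobi_val_add_even ?coprime_addmull // IH.
have ons : odd (t + r * s + s) by rewrite oddD on (negPf es).
by rewrite (signr_hpred_mod4 ons ns_mod) (signr_hpredM_mod4 on ons n_mod ns_mod).
Qed.

Lemma jacobi_val_addmul_period4 s t c : ~~ odd s -> odd t -> coprime s t ->
  jacobi_val s%:Z (t + c * s) = jacobi_val s%:Z (t + (c %% 4) * s).
Proof.
move=> es ot cop; rewrite {1}(divn_eq c 4); elim: (c %/ 4)%N => [|q IH]; first by rewrite add0n.
have -> : (t + (q.+1 * 4 + c %% 4) * s = t + (q * 4 + c %% 4) * s + 4 * s)%N by ring.
by rewrite jacobi_val_add4mul ?coprime_addmull // oddD oddM (negPf es) andbF ot.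
Qed.

Lemma jacobi_val_addmul_odd s t c : odd s -> odd (c * s + t) -> coprime s t ->
  jacobi_val s%:Z (c * s + t) = (-1) ^+ (hpred s * hpred (c * s + t))%N * jacobi_val t%:Z s.
Proof.
move=> os oP cop; rewrite jacobi_val_flip //; last by rewrite addnC coprime_addmull.
by rewrite PoszD PoszM addrC jacobi_val_addmul.
Qed.

Lemma jacobi_addmul_mod4 S T C S' T' C' : coprime S T -> coprime S' T' ->
  S = S' %[mod 4] -> T = T' %[mod 4] -> C = C' %[mod 4] ->
  jacobi S%:Z T = jacobi S'%:Z T' -> jacobi T%:Z S = jacobi T'%:Z S' ->
  jacobi S%:Z (C * S + T) = jacobi S'%:Z (C' * S' + T').
Proof.
move=> cop cop' SS' TT' CC' jacobi_ST jacobi_TS.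
have P_mod : C * S + T = C' * S' + T' %[mod 4].
  by rewrite -modnDm -modnMm SS' TT' CC' modnMm modnDm.
rewrite !jacobiE -(odd_mod4 P_mod); case: ifP => // oP; congr JVal.
have [oS | eS] := boolP (odd S).
  have oS' : odd S' by rewrite -(odd_mod4 SS').
  move: jacobi_TS; rewrite !jacobiE -(odd_mod4 SS') oS => -[jacobi_TS].
  rewrite !jacobi_val_addmul_odd -?(odd_mod4 P_mod) // jacobi_TS.
  by rewrite (signr_hpredM_mod4 oS oP SS' P_mod).
have eS' : ~~ odd S' by rewrite -(odd_mod4 SS').
have oT := coprime_even_odd cop eS; have oT' := coprime_even_odd cop' eS'.
move: jacobi_ST; rewrite !jacobiE -(odd_mod4 TT') oT => -[jacobi_ST].
rewrite addnC (addnC _ T') jacobi_val_addmul_period4 // (jacobi_val_addmul_period4 _ eS') // CC'.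
exact: jacobi_val_addmul_even_mod4.
Qed.

Lemma jacobi_addmul_mod4_int (S T C S' T' C' : int) :
  0 <= S -> 0 <= T -> 0 <= C -> 0 <= S' -> 0 <= T' -> 0 <= C' ->
  coprime `|S| `|T| -> coprime `|S'| `|T'| ->
  (S = S' %[mod 4])%Z -> (T = T' %[mod 4])%Z -> (C = C' %[mod 4])%Z ->
  jacobi S `|T| = jacobi S' `|T'| -> jacobi T `|S| = jacobi T' `|S'| ->
  jacobi S `|C * S + T| = jacobi S' `|C' * S' + T'|.
Proof.
case: S T C S' T' C' => [S|//] [T|//] [C|//] [S'|//] [T'|//] [C'|//] _ _ _ _ _ _ /=.
rewrite !modz_nat => cop cop' [SS'] [TT'] [CC'].
exact: jacobi_addmul_mod4.
Qed.

Definition tail_digits (a : nat -> int) : nat -> int := fun i => a i.+1.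

Lemma num_pairS a k :
  num_pair a k.+1 = ((num_pair a k).2, a k.+1 * (num_pair a k).2 + (num_pair a k).1).
Proof. by rewrite /=; case: num_pair. Qed.

Lemma den_pairS a k :
  den_pair a k.+1 = ((den_pair a k).2, a k.+1 * (den_pair a k).2 + (den_pair a k).1).
Proof. by rewrite /=; case: den_pair. Qed.

(* [a_0; a_1, ..., a_(k+1)] = a_0 + 1 / [a_1; ..., a_(k+1)], on numerators and denominators. *)
Lemma num_den_pair_tail a k :
  num_pair a k.+1 =
    (a 0%N * (num_pair (tail_digits a) k).1 + (den_pair (tail_digits a) k).1,
     a 0%N * (num_pair (tail_digits a) k).2 + (den_pair (tail_digits a) k).2)
  /\ den_pair a k.+1 = num_pair (tail_digits a) k.
Proof.
elim: k => [|k [IHnum IHden]]; first by split; congr pair; rewrite /= /tail_digits; ring.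
rewrite (num_pairS a k.+1) (den_pairS a k.+1) IHnum IHden num_pairS den_pairS /=.
by split; congr pair; rewrite /tail_digits; ring.
Qed.

Lemma cf_num_tail a k : cf_num a k.+1 = a 0%N * cf_num (tail_digits a) k + cf_den (tail_digits a) k.
Proof. by rewrite /cf_num /cf_den (num_den_pair_tail a k).1. Qed.

Lemma cf_den_tail a k : cf_den a k.+1 = cf_num (tail_digits a) k.
Proof. by rewrite /cf_num /cf_den (num_den_pair_tail a k).2. Qed.

Lemma num_den_pair_det a k :
  (num_pair a k).2 * (den_pair a k).1 - (num_pair a k).1 * (den_pair a k).2 = (-1) ^+ k.+1.
Proof.
elim: k => [|k IH]; first by rewrite /= mulr0 mul1r sub0r expr1.
by rewrite num_pairS den_pairS /= exprS -IH; ring.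
Qed.

Lemma cf_coprime a k : coprime `|cf_num a k| `|cf_den a k|.
Proof.
rewrite -coprimezE; apply/coprimezP.
exists ((-1) ^+ k.+1 * (den_pair a k).1, - (-1) ^+ k.+1 * (num_pair a k).1) => /=.
rewrite /cf_num /cf_den.
have -> : forall e : int, e * (den_pair a k).1 * (num_pair a k).2 +
    - e * (num_pair a k).1 * (den_pair a k).2 =
    e * ((num_pair a k).2 * (den_pair a k).1 - (num_pair a k).1 * (den_pair a k).2).
  by move=> e; ring.
by rewrite num_den_pair_det -expr2 -exprM mulnC exprM sqrrN !expr1n.
Qed.

Lemma num_den_pair_gt0 a k : (forall i, (i <= k)%N -> 0 < a i) ->
  [/\ 0 <= (num_pair a k).1, 0 < (num_pair a k).2,
      0 <= (den_pair a k).1 & 0 < (den_pair a k).2].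
Proof.
elim: k => [|k IH] a_gt0; first by rewrite /= ler01 ltr01 lexx a_gt0.
have [u_ge0 v_gt0 w_ge0 z_gt0] := IH (fun i i_le_k => a_gt0 i (leqW i_le_k)).
have ak_gt0 := a_gt0 k.+1 (leqnn _).
by rewrite num_pairS den_pairS /=; split; rewrite ?ltW // ltr_pwDl // mulr_gt0.
Qed.

Lemma cf_num_den_gt0 a k : (forall i, (i <= k)%N -> 0 < a i) ->
  0 < cf_num a k /\ 0 < cf_den a k.
Proof. by case/num_den_pair_gt0. Qed.

Lemma num_den_pair_mod4 a b k : (forall i, (i <= k)%N -> (a i = b i %[mod 4])%Z) ->
  [/\ ((num_pair a k).1 = (num_pair b k).1 %[mod 4])%Z,
      ((num_pair a k).2 = (num_pair b k).2 %[mod 4])%Z,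
      ((den_pair a k).1 = (den_pair b k).1 %[mod 4])%Z &
      ((den_pair a k).2 = (den_pair b k).2 %[mod 4])%Z].
Proof.
elim: k => [|k IH] ab_mod; first by split => //=; apply: ab_mod.
have [u_mod v_mod w_mod z_mod] := IH (fun i i_le_k => ab_mod i (leqW i_le_k)).
have ak_mod := ab_mod k.+1 (leqnn _).
rewrite !num_pairS !den_pairS /=; split => //.
  by rewrite -modzDm -modzMm ak_mod v_mod u_mod modzMm modzDm.
by rewrite -modzDm -modzMm ak_mod z_mod w_mod modzMm modzDm.
Qed.

Lemma cf_num_den_mod4 a b k : (forall i, (i <= k)%N -> (a i = b i %[mod 4])%Z) ->
  (cf_num a k = cf_num b k %[mod 4])%Z /\ (cf_den a k = cf_den b k %[mod 4])%Z.
Proof. by case/num_den_pair_mod4. Qed.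

Lemma irrational_frac (R : realType) (y : R) : irrational y ->
  0 < y - (Num.floor y)%:~R < 1.
Proof.
move=> y_irr; apply/andP; split; last by have := floorD1_gt y; rewrite intrD; lra.
rewrite lt_neqAle subr_ge0 floor_le andbT eq_sym subr_eq0.
apply/eqP => y_int; apply: y_irr; rewrite y_int.
by exists (Num.floor y)%:~R; rewrite ?ratr_int.
Qed.

Lemma irrational_cf_rest (R : realType) (x : R) i : irrational x -> irrational (cf_rest x i).
Proof.
move=> x_irr; elim: i => [//|i IH] /= [q _ qE]; apply: IH.
exists ((Num.floor (cf_rest x i))%:~R + q^-1) => //.
have ratrV : ratr q^-1 = (ratr q)^-1 :> R := fmorphV _ q.
by rewrite rmorphD /= ratrV qE invrK ratr_int addrC subrK.
Qed.

Lemma cf_digit_gt0 (R : realType) (x : R) i : irrational x -> 0 < cf_digit x i.+1.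
Proof.
move=> /(irrational_cf_rest (i := i)) /irrational_frac /andP[frac_gt0 frac_lt1].
by rewrite /cf_digit /= floor_gt0 invf_ge1 // ltW.
Qed.

Lemma jacobi_addmul_abs c m s : 0 <= s -> jacobi (c * s + m) `|s| = jacobi m `|s|.
Proof. by move=> s_ge0; rewrite -{1}(gez0_abs s_ge0) addrC !jacobiE jacobi_val_addmul. Qed.

Lemma jacobi_cf_mod4 k (a b : nat -> int) :
  (forall i, 0 < a i.+1) -> (forall i, 0 < b i.+1) ->
  (forall i, (i <= k)%N -> (a i = b i %[mod 4])%Z) ->
  jacobi (cf_num a k) `|cf_den a k| = jacobi (cf_num b k) `|cf_den b k| /\
  (0 <= a 0%N -> 0 <= b 0%N ->
   jacobi (cf_den a k) `|cf_num a k| = jacobi (cf_den b k) `|cf_num b k|).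
Proof.
elim: k a b => [|k IH] a b a_gt0 b_gt0 ab_mod.
  split; first by rewrite /cf_num /cf_den /= !jacobiE /= !jacobi_val1r.
  move=> a0_ge0 b0_ge0; rewrite /cf_num /cf_den /= !jacobiE.
  have -> : odd `|a 0%N| = odd `|b 0%N|.
    case: (a 0%N) (b 0%N) a0_ge0 b0_ge0 (ab_mod 0%N isT) => [A|//] [B|//] _ _.
    by rewrite !modz_nat => -[/odd_mod4].
  by case: ifP; rewrite // !jacobi_val1l.
have [IHnum IHden] := IH (tail_digits a) (tail_digits b)
  (fun i => a_gt0 i.+1) (fun i => b_gt0 i.+1) (fun i i_le_k => ab_mod i.+1 i_le_k).
have [Sa_gt0 Ta_gt0] := cf_num_den_gt0 (a := tail_digits a) (k := k) (fun i _ => a_gt0 i).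
have [Sb_gt0 Tb_gt0] := cf_num_den_gt0 (a := tail_digits b) (k := k) (fun i _ => b_gt0 i).
have IHden' := IHden (ltW (a_gt0 0%N)) (ltW (b_gt0 0%N)).
rewrite !cf_num_tail !cf_den_tail !jacobi_addmul_abs ?(ltW Sa_gt0) ?(ltW Sb_gt0) //.
split=> // a0_ge0 b0_ge0; have [S_mod T_mod] := cf_num_den_mod4 (k := k)
  (fun i i_le_k => ab_mod i.+1 i_le_k : (tail_digits a i = tail_digits b i %[mod 4])%Z).
by apply: jacobi_addmul_mod4_int (ab_mod 0%N isT) IHnum IHden';
  rewrite ?cf_coprime ?(ltW Sa_gt0) ?(ltW Ta_gt0) ?(ltW Sb_gt0) ?(ltW Tb_gt0).
Qed.

Theorem theorem2 (R : realType) (x y : R) (k : nat) :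
  irrational x -> irrational y ->
  (forall i : nat, (i <= k)%N ->
     (cf_digit x i = cf_digit y i %[mod 4%:Z])%Z) ->
  jacobi (cf_num (cf_digit x) k) `|cf_den (cf_digit x) k|%N
    = jacobi (cf_num (cf_digit y) k) `|cf_den (cf_digit y) k|%N
  /\
  (0 <= cf_digit x 0%N -> 0 <= cf_digit y 0%N ->
   jacobi (cf_den (cf_digit x) k) `|cf_num (cf_digit x) k|%N
    = jacobi (cf_den (cf_digit y) k) `|cf_num (cf_digit y) k|%N).
Proof.
move=> x_irr y_irr digits_mod.
by apply: jacobi_cf_mod4 => // i; apply: cf_digit_gt0.
Qed.
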